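(* Let $n\ge 3$, $0<m<\frac{n-2}{n}$, $\eta>0$, $\rho>0$, and let $\alpha,\beta$ satisfy $\alpha=\frac{2\beta+\rho}{1-m}$ and $0<\alpha\le n\beta$. Let $v$ be a solution of $$\frac{n-1}{m}\left((v^m)''+\frac{n-1}{r}(v^m)'\right)+\alpha v+\beta r v'=0,\quad v>0,\quad \text{in }(0,\infty),$$ with $v(0)=\eta$, $v'(0)=0$, and let $w(r)=r^2v(r)^{1-m}$. Then there exists a constant $C_1>0$ such that $w(r)\le C_1$ for all $r\ge 1$. *)

From Stdlib Require Import Reals.
From Coquelicot Require Import Coquelicot.
Open Scope R_scope.

Definition radial_solution (n : nat) (m alpha beta eta : R) (v : R -> R) : Prop :=
  let u := fun r => Rpower (v r) m in
  (forall r, 0 < r -> 0 < v r) /\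
  (forall r, 0 < r -> ex_derive v r) /\
  (forall r, 0 < r -> ex_derive u r) /\
  (forall r, 0 < r -> ex_derive (Derive u) r) /\
  (forall r, 0 < r ->
     (INR n - 1) / m * (Derive (Derive u) r + (INR n - 1) / r * Derive u r)
     + alpha * v r + beta * r * Derive v r = 0) /\
  v 0 = eta /\
  filterlim (fun h => (v h - v 0) / h) (at_right 0) (locally 0).

Definition w_of (m : R) (v : R -> R) (r : R) : R := r ^ 2 * Rpower (v r) (1 - m).

From Stdlib Require Import Reals Lra Lia Classical.
From Coquelicot Require Import Coquelicot.
Open Scope R_scope.

(* Choose a small delta > 0 and s with (1 - m) s > 2 and (beta - delta) s < alpha - n delta, and
   put W = (n - 1) s / delta.  By the equation, the flux F = r^(n-1) ((n-1)/m (v^m)' + beta r v)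
   satisfies F' = (n beta - alpha) r^(n-1) v, and the decay gap Z = (beta - delta) r^n v - F has
   the sign of -(n - 1) q - delta w, where q = r v'/v.  Both W - w and Z are positive near 0
   (v(0) = eta > 0, and F is small along a sequence r -> 0 because v^m > 0), and neither can
   vanish first: if w reaches W while Z >= 0 then q <= -s and w' = (w/r)(2 + (1 - m) q) < 0;
   if Z vanishes while w <= W then q >= -s and
   Z' = r^(n-1) v ((beta - delta)(n + q) - (n beta - alpha)) > 0.  Hence w < W on (0, oo). *)

Lemma right_continuous_of_right_derivative (f : R -> R) (l : R) :
  filterlim (fun h => (f h - f 0) / h) (at_right 0) (locally l) ->
  forall eps, 0 < eps ->
  exists tau, 0 < tau /\ forall h, 0 < h < tau -> Rabs (f h - f 0) < eps.
Proof.
  intros Hlim eps Heps.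
  destruct (proj1 (filterlim_locally _ _) Hlim (mkposreal 1 Rlt_0_1)) as [e He].
  assert (HM : 0 < Rabs l + 1) by (pose proof (Rabs_pos l); lra).
  exists (Rmin e (eps / (Rabs l + 1))).
  split; [apply Rmin_pos; [apply cond_pos | now apply Rdiv_lt_0_compat]|].
  intros h Hh.
  assert (He_h : h < e) by (pose proof (Rmin_l e (eps / (Rabs l + 1))); lra).
  assert (Heps_h : h < eps / (Rabs l + 1)) by (pose proof (Rmin_r e (eps / (Rabs l + 1))); lra).
  assert (Hq : Rabs ((f h - f 0) / h - l) < 1).
  { apply (He h); [|lra].
    unfold ball; simpl; unfold AbsRing_ball, abs, minus, plus, opp; simpl.
    rewrite Ropp_0, Rplus_0_r, Rabs_right; lra. }
  assert (Hq' : Rabs ((f h - f 0) / h) < Rabs l + 1).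
  { pose proof (Rabs_triang_inv ((f h - f 0) / h) l). lra. }
  replace (f h - f 0) with ((f h - f 0) / h * h) by (field; lra).
  rewrite Rabs_mult, (Rabs_right h) by lra.
  apply (Rlt_le_trans _ ((Rabs l + 1) * h)); [apply Rmult_lt_compat_r; lra|].
  replace eps with ((Rabs l + 1) * (eps / (Rabs l + 1))) by (field; lra).
  apply Rmult_le_compat_l; lra.
Qed.

Lemma Rpower_minus_1 (x a : R) : 0 < x -> Rpower x (a - 1) = Rpower x a / x.
Proof.
  intro Hx. unfold Rminus, Rdiv. rewrite Rpower_plus, Rpower_Ropp, Rpower_1 by exact Hx.
  reflexivity.
Qed.

Lemma is_derive_Rpower (a x : R) :
  0 < x -> is_derive (fun y => Rpower y a) x (a * Rpower x a / x).
Proof.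
  intro Hx. rewrite <- Rmult_div_assoc, <- Rpower_minus_1 by exact Hx.
  now apply is_derive_Reals, derivable_pt_lim_power.
Qed.

Lemma pow_pred_mul (x : R) (n : nat) : (1 <= n)%nat -> x ^ (n - 1) * x = x ^ n.
Proof. intro Hn. destruct n as [|k]; [lia|]. simpl. rewrite Nat.sub_0_r. apply Rmult_comm. Qed.

Lemma pow_le_self (x : R) (n : nat) : 0 <= x <= 1 -> (1 <= n)%nat -> x ^ n <= x.
Proof.
  intros Hx Hn. rewrite <- (pow_pred_mul x n Hn).
  assert (x ^ (n - 1) <= 1) by (rewrite <- (pow1 (n - 1)); apply pow_incr; lra).
  assert (0 <= x ^ (n - 1)) by (apply pow_le; lra).
  nra.
Qed.

Lemma continuity_pt_of_is_derive (f : R -> R) (x l : R) :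
  is_derive f x l -> continuity_pt f x.
Proof. intro Hf. apply derivable_continuous_pt. exists l. now apply is_derive_Reals. Qed.

Lemma nonincreasing_of_derive_nonpos (f df : R -> R) (a b : R) :
  (forall x, a < x < b -> is_derive f x (df x)) ->
  (forall x, a < x < b -> df x <= 0) ->
  forall x y, a < x -> x <= y -> y < b -> f y <= f x.
Proof.
  intros Hd Hneg x y Hx Hxy Hy.
  destruct (Req_dec x y) as [<-|Hne]; [lra|].
  assert (Hmin : Rmin x y = x) by (apply Rmin_left; lra).
  assert (Hmax : Rmax x y = y) by (apply Rmax_right; lra).
  destruct (MVT_gen f x y df) as [c [Hc Hfc]]; rewrite ?Hmin, ?Hmax in *.
  - intros z Hz. apply Hd. lra.
  - intros z Hz. apply (continuity_pt_of_is_derive _ _ (df z)), Hd. lra.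
  - assert (df c <= 0) by (apply Hneg; lra).
    assert (df c * (y - x) <= 0) by (apply Rmult_le_0_r; lra).
    lra.
Qed.

Lemma pos_near_of_continuity_pt (g : R -> R) (s : R) :
  continuity_pt g s -> 0 < g s ->
  exists e, 0 < e /\ forall t, Rabs (t - s) < e -> 0 < g t.
Proof.
  intros Hc Hs.
  destruct (proj1 (continuity_pt_locally g s) Hc (mkposreal _ Hs)) as [e He].
  exists e. split; [apply cond_pos|]. intros t Ht.
  specialize (He t Ht). simpl in He. apply Rabs_def2 in He. lra.
Qed.

Lemma nonneg_of_continuity_pt_pos_left (g : R -> R) (a s : R) :
  a < s -> continuity_pt g s -> (forall t, a < t < s -> 0 < g t) -> 0 <= g s.
Proof.
  intros Has Hc Hpos. apply Rnot_lt_le. intro Hneg.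
  destruct (pos_near_of_continuity_pt (fun t => - g t) s) as [e [He Hnear]].
  - now apply (continuity_pt_opp g).
  - lra.
  - set (t := s - Rmin e (s - a) / 2).
    assert (Hm : 0 < Rmin e (s - a)) by (apply Rmin_pos; lra).
    pose proof (Rmin_l e (s - a)). pose proof (Rmin_r e (s - a)).
    assert (0 < - g t) by (apply Hnear; unfold t; rewrite Rabs_left; lra).
    assert (0 < g t) by (apply Hpos; unfold t; lra).
    lra.
Qed.

Lemma derive_nonpos_of_zero_pos_left (g : R -> R) (a s d : R) :
  a < s -> is_derive g s d -> g s = 0 -> (forall t, a < t < s -> 0 < g t) -> d <= 0.
Proof.
  intros Has Hd Hgs Hpos. apply Rnot_lt_le. intro Hdpos.
  apply is_derive_Reals in Hd.
  destruct (Hd d Hdpos) as [[e He] Hquot]; simpl in Hquot.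
  set (h := - Rmin e (s - a) / 2).
  assert (Hm : 0 < Rmin e (s - a)) by (apply Rmin_pos; lra).
  pose proof (Rmin_l e (s - a)). pose proof (Rmin_r e (s - a)).
  assert (Hh : h < 0) by (unfold h; lra).
  specialize (Hquot h (Rlt_not_eq _ _ Hh) ltac:(rewrite Rabs_left; unfold h; lra)).
  rewrite Hgs, Rminus_0_r in Hquot. apply Rabs_def2 in Hquot.
  assert (Hgh : 0 < g (s + h)) by (apply Hpos; unfold h; lra).
  assert (g (s + h) / h < 0) by (apply Rdiv_pos_neg; lra).
  lra.
Qed.

Lemma exists_first_failure (P : R -> Prop) (tau : R) :
  0 < tau -> (forall t, 0 < t < tau -> P t) ->
  (forall t, 0 < t -> P t -> exists e, 0 < e /\ forall t', t <= t' < t + e -> P t') ->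
  forall r, 0 < r -> ~ P r ->
  exists s, 0 < s <= r /\ (forall t, 0 < t < s -> P t) /\ ~ P s.
Proof.
  intros Htau Hinit Hopen r Hr HPr.
  set (E := fun x => 0 < x <= r /\ forall t, 0 < t <= x -> P t).
  assert (Htau_r : tau <= r) by (apply Rnot_lt_le; intro; apply HPr, Hinit; lra).
  assert (HE : E (tau / 2)) by (split; [lra | intros t Ht; apply Hinit; lra]).
  assert (Hbound : bound E) by (exists r; intros x [Hx _]; lra).
  destruct (completeness E Hbound (ex_intro _ _ HE)) as [s [Hub Hlub]].
  assert (Hs_low : tau / 2 <= s) by (apply Hub, HE).
  assert (Hs_r : s <= r) by (apply Hlub; intros x [Hx _]; lra).
  assert (Hbelow : forall t, 0 < t < s -> P t).
  { intros t Ht. apply NNPP. intro HPt.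
    assert (s <= t); [|lra].
    apply Hlub. intros x [Hx HPx]. apply Rnot_lt_le. intro Htx. apply HPt, HPx. lra. }
  exists s. split; [lra|]. split; [exact Hbelow|]. intro HPs.
  destruct (Req_dec s r) as [Hsr|Hsr]; [subst s; contradiction|].
  destruct (Hopen s ltac:(lra) HPs) as [e [He Hright]].
  set (x := s + Rmin e (r - s) / 2).
  assert (Hm : 0 < Rmin e (r - s)) by (apply Rmin_pos; lra).
  pose proof (Rmin_l e (r - s)). pose proof (Rmin_r e (r - s)).
  assert (E x).
  { split; [unfold x; lra|]. intros t Ht.
    destruct (Rlt_le_dec t s); [apply Hbelow; lra | apply Hright; unfold x in Ht; lra]. }
  assert (x <= s) by (apply Hub; assumption).
  unfold x in *; lra.
Qed.

Lemma pos_of_barrier (g1 g2 dg1 dg2 : R -> R) (tau : R) :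
  0 < tau ->
  (forall r, 0 < r -> is_derive g1 r (dg1 r)) ->
  (forall r, 0 < r -> is_derive g2 r (dg2 r)) ->
  (forall r, 0 < r < tau -> 0 < g1 r /\ 0 < g2 r) ->
  (forall r, 0 < r -> g1 r = 0 -> 0 <= g2 r -> 0 < dg1 r) ->
  (forall r, 0 < r -> g2 r = 0 -> 0 <= g1 r -> 0 < dg2 r) ->
  forall r, 0 < r -> 0 < g1 r /\ 0 < g2 r.
Proof.
  intros Htau Hd1 Hd2 Hinit Hexit1 Hexit2 r Hr.
  assert (Hc1 : forall t, 0 < t -> continuity_pt g1 t)
    by (intros t Ht; exact (continuity_pt_of_is_derive _ _ _ (Hd1 t Ht))).
  assert (Hc2 : forall t, 0 < t -> continuity_pt g2 t)
    by (intros t Ht; exact (continuity_pt_of_is_derive _ _ _ (Hd2 t Ht))).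
  apply NNPP. intro Hfail.
  destruct (exists_first_failure (fun t => 0 < g1 t /\ 0 < g2 t) tau Htau Hinit) with r
    as [s [Hs [Hbelow Hnot]]]; [|exact Hr|exact Hfail|].
  { intros t Ht [Hg1 Hg2].
    destruct (pos_near_of_continuity_pt g1 t (Hc1 t Ht) Hg1) as [e1 [He1 Hnear1]].
    destruct (pos_near_of_continuity_pt g2 t (Hc2 t Ht) Hg2) as [e2 [He2 Hnear2]].
    exists (Rmin e1 e2). split; [now apply Rmin_pos|].
    pose proof (Rmin_l e1 e2). pose proof (Rmin_r e1 e2).
    intros t' Ht'. split; [apply Hnear1 | apply Hnear2]; rewrite Rabs_right; lra. }
  assert (Hs1 : 0 <= g1 s)
    by (apply (nonneg_of_continuity_pt_pos_left g1 0); [lra | apply Hc1; lra | apply Hbelow]).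
  assert (Hs2 : 0 <= g2 s)
    by (apply (nonneg_of_continuity_pt_pos_left g2 0); [lra | apply Hc2; lra | apply Hbelow]).
  destruct (Req_dec (g1 s) 0) as [Hz1|Hz1]; [|destruct (Req_dec (g2 s) 0) as [Hz2|Hz2]].
  - assert (dg1 s <= 0)
      by (apply (derive_nonpos_of_zero_pos_left g1 0 s);
          [lra | apply Hd1; lra | exact Hz1 | apply Hbelow]).
    assert (0 < dg1 s) by (apply Hexit1; lra).
    lra.
  - assert (dg2 s <= 0)
      by (apply (derive_nonpos_of_zero_pos_left g2 0 s);
          [lra | apply Hd2; lra | exact Hz2 | apply Hbelow]).
    assert (0 < dg2 s) by (apply Hexit2; lra).
    lra.
  - apply Hnot. lra.
Qed.

Lemma nonpos_of_nonincreasing_liminf (G dG : R -> R) (tau : R) :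
  (forall x, 0 < x < tau -> is_derive G x (dG x)) ->
  (forall x, 0 < x < tau -> dG x <= 0) ->
  (forall r c, 0 < r -> 0 < c -> exists t, 0 < t < r /\ G t < c) ->
  forall x, 0 < x < tau -> G x <= 0.
Proof.
  intros Hd Hneg Hsmall x Hx. apply Rnot_lt_le. intro Hpos.
  destruct (Hsmall x (G x)) as [t [Ht HGt]]; [lra | lra |].
  assert (G x <= G t) by (apply (nonincreasing_of_derive_nonpos G dG 0 tau); lra || assumption).
  lra.
Qed.

Lemma exists_div_pow_gt (K B x0 : R) (k : nat) :
  0 < K -> 0 < x0 <= 1 -> exists t, 0 < t <= x0 /\ B < K / t ^ S k.
Proof.
  intros HK Hx0.
  assert (HB : 0 < Rabs B + 1) by (pose proof (Rabs_pos B); lra).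
  set (t := Rmin x0 (K / (Rabs B + 1))).
  assert (Ht : 0 < t) by (apply Rmin_pos; [lra | apply Rdiv_lt_0_compat; lra]).
  assert (Htx0 : t <= x0) by apply Rmin_l.
  assert (HtK : t <= K / (Rabs B + 1)) by apply Rmin_r.
  exists t. split; [lra|].
  assert (Htk : 0 < t ^ S k <= t) by (split; [now apply pow_lt | apply pow_le_self; lra || lia]).
  assert (HBt : (Rabs B + 1) * t ^ S k <= K).
  { replace K with ((Rabs B + 1) * (K / (Rabs B + 1))) by (field; lra).
    apply Rmult_le_compat_l; lra. }
  assert (Rabs B + 1 <= K / t ^ S k).
  { apply (Rmult_le_reg_r (t ^ S k)); [lra|].
    unfold Rdiv. rewrite Rmult_assoc, Rinv_l, Rmult_1_r by lra. exact HBt. }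
  pose proof (Rle_abs B). lra.
Qed.

(* Otherwise [u x + c x^(1-p) / (p-1)] would be nondecreasing on [(0, r)], hence bounded
   above near [0], which is impossible since [u > 0]. *)
Lemma exists_small_pow_mul_derive (u du : R -> R) (p : nat) :
  (2 <= p)%nat -> (forall x, 0 < x -> 0 < u x) ->
  (forall x, 0 < x -> is_derive u x (du x)) ->
  forall r c, 0 < r -> 0 < c -> exists t, 0 < t < r /\ t ^ p * du t < c.
Proof.
  intros Hp Hu Hdu r c Hr Hc.
  destruct p as [|[|k]]; [lia | lia |]. apply NNPP. intro Hnone.
  assert (Hlarge : forall t, 0 < t < r -> c <= t ^ S (S k) * du t).
  { intros t Ht. apply Rnot_lt_le. intro. apply Hnone. now exists t. }
  assert (Hk : 0 < INR (S k)) by (apply lt_0_INR; lia).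
  set (K := c / INR (S k)).
  assert (HK : 0 < K) by (unfold K; apply Rdiv_lt_0_compat; lra).
  set (h := fun x => - (u x + K / x ^ S k)).
  assert (Hh : forall x, 0 < x < r -> is_derive h x (c / x ^ S (S k) - du x)).
  { intros x Hx. unfold h.
    assert (x ^ k <> 0) by (apply pow_nonzero; lra).
    auto_derive.
    - split; [exists (du x); apply Hdu; lra|].
      split; [apply Rmult_integral_contrapositive; lra | exact I].
    - change (match k with 0%nat => 1 | S _ => INR k + 1 end) with (INR (S k)).
      change (Derive (fun y => u y) x) with (Derive u x).
      rewrite (is_derive_unique u x (du x)) by (apply Hdu; lra).
      unfold K. change (x ^ S (S k)) with (x * (x * x ^ k)). field. repeat split; lra. }
  assert (Hh_nonpos : forall x, 0 < x < r -> c / x ^ S (S k) - du x <= 0).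
  { intros x Hx. assert (0 < x ^ S (S k)) by (apply pow_lt; lra).
    specialize (Hlarge x Hx).
    assert (c / x ^ S (S k) <= du x); [|lra].
    apply (Rmult_le_reg_r (x ^ S (S k))); [lra|].
    unfold Rdiv. rewrite Rmult_assoc, Rinv_l by lra. lra. }
  set (x0 := Rmin (r / 2) 1).
  assert (Hx0 : 0 < x0) by (apply Rmin_pos; lra).
  assert (Hx0r : x0 <= r / 2) by apply Rmin_l.
  assert (Hx01 : x0 <= 1) by apply Rmin_r.
  destruct (exists_div_pow_gt K (u x0 + K / x0 ^ S k) x0 k HK ltac:(lra)) as [t [Ht Hunbounded]].
  assert (Hmono : h x0 <= h t)
    by (apply (nonincreasing_of_derive_nonpos h _ 0 r Hh Hh_nonpos); lra).
  unfold h in Hmono. pose proof (Hu t ltac:(lra)).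
  lra.
Qed.

Definition elasticity (v : R -> R) (r : R) : R := r * Derive v r / v r.

Definition radial_flux (n : nat) (m beta : R) (v : R -> R) (r : R) : R :=
  (INR n - 1) / m * r ^ (n - 1) * Derive (fun x => Rpower (v x) m) r + beta * r ^ n * v r.

Definition decay_gap (n : nat) (m beta delta : R) (v : R -> R) (r : R) : R :=
  (beta - delta) * r ^ n * v r - radial_flux n m beta v r.

Section RadialSolution.

Variables (n : nat) (m alpha beta eta : R) (v : R -> R).

Local Notation N := (INR n).
Local Notation u := (fun x => Rpower (v x) m).
Local Notation w := (w_of m v).

Hypothesis n_ge_3 : (3 <= n)%nat.
Hypothesis m_pos : 0 < m.
Hypothesis m_lt_1 : m < 1.
Hypothesis eta_pos : 0 < eta.
Hypothesis beta_pos : 0 < beta.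
Hypothesis alpha_le : alpha <= N * beta.
Hypothesis v_pos : forall r, 0 < r -> 0 < v r.
Hypothesis v_derivable : forall r, 0 < r -> ex_derive v r.
Hypothesis u'_derivable : forall r, 0 < r -> ex_derive (Derive u) r.
Hypothesis radial_ode : forall r, 0 < r ->
  (N - 1) / m * (Derive (Derive u) r + (N - 1) / r * Derive u r)
  + alpha * v r + beta * r * Derive v r = 0.
Hypothesis v_right_continuous : forall eps, 0 < eps ->
  exists tau, 0 < tau /\ forall r, 0 < r < tau -> Rabs (v r - eta) < eps.

Lemma dim_ge_3 : 3 <= N.
Proof. apply (le_INR 3) in n_ge_3. simpl in n_ge_3. lra. Qed.

Lemma v_near_eta (eps : R) : 0 < eps ->
  exists tau, 0 < tau /\ forall r, 0 < r < tau -> eta - eps < v r < eta + eps.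
Proof.
  intro Heps. destruct (v_right_continuous eps Heps) as [tau [Htau Hnear]].
  exists tau. split; [exact Htau|]. intros r Hr.
  pose proof (Rabs_def2 _ _ (Hnear r Hr)). lra.
Qed.

Lemma is_derive_vpow (a r : R) : 0 < r ->
  is_derive (fun x => Rpower (v x) a) r (a * Rpower (v r) a / v r * Derive v r).
Proof.
  intro Hr. assert (Hv := v_pos r Hr). auto_derive.
  - split; [eexists; now apply is_derive_Rpower|]. split; [now apply v_derivable | exact I].
  - replace (Derive (fun x : R => Rpower x a) (v r)) with (a * Rpower (v r) a / v r)
      by (symmetry; now apply is_derive_unique, is_derive_Rpower).
    change (Derive (fun x => v x) r) with (Derive v r). ring.
Qed.

Lemma Derive_vpow (a r : R) : 0 < r ->
  Derive (fun x => Rpower (v x) a) r = a * Rpower (v r) a / v r * Derive v r.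
Proof. intro Hr. now apply is_derive_unique, is_derive_vpow. Qed.

Lemma is_derive_w_of (r : R) : 0 < r ->
  is_derive w r (w r / r * (2 + (1 - m) * elasticity v r)).
Proof.
  intro Hr. assert (Hv := v_pos r Hr).
  unfold w_of, elasticity. auto_derive.
  - split; [eexists; now apply is_derive_Rpower|]. split; [now apply v_derivable | exact I].
  - replace (Derive (fun x : R => Rpower x (1 - m)) (v r))
      with ((1 - m) * Rpower (v r) (1 - m) / v r)
      by (symmetry; now apply is_derive_unique, is_derive_Rpower).
    change (Derive (fun x => v x) r) with (Derive v r). field. lra.
Qed.

Lemma is_derive_radial_flux (r : R) : 0 < r ->
  is_derive (radial_flux n m beta v) r ((N * beta - alpha) * r ^ (n - 1) * v r).
Proof.
  intro Hr. unfold radial_flux. auto_derive.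
  - split; [now apply u'_derivable|]. split; [now apply v_derivable | exact I].
  - change (Derive (fun x => Derive u x) r) with (Derive (Derive u) r).
    change (Derive (fun x => v x) r) with (Derive v r).
    assert (Hode := radial_ode r Hr).
    destruct n as [|[|p]]; [lia | lia |].
    replace (S (S p) - 1)%nat with (S p) in * by lia.
    cbn [Init.Nat.pred pow]. rewrite !S_INR in *.
    apply Rminus_diag_uniq. rewrite <- (Rmult_0_r (r * r ^ p)), <- Hode.
    field. split; lra.
Qed.

Lemma decay_gap_scaled (delta r : R) : 0 < r ->
  r * decay_gap n m beta delta v r
  = r ^ (n - 1) * Rpower (v r) m * (- (N - 1) * elasticity v r - delta * w r).
Proof.
  intro Hr. assert (Hv := v_pos r Hr).
  assert (Hvv : Rpower (v r) m * Rpower (v r) (1 - m) = v r).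
  { rewrite <- Rpower_plus. replace (m + (1 - m)) with 1 by ring. now apply Rpower_1. }
  unfold decay_gap, radial_flux, elasticity, w_of.
  rewrite Derive_vpow by exact Hr.
  rewrite <- (pow_pred_mul r n) by lia.
  assert (0 < Rpower (v r) m) by apply exp_pos.
  assert (0 < Rpower (v r) (1 - m)) by apply exp_pos.
  replace (delta * (r ^ 2 * Rpower (v r) (1 - m))) with (delta * r ^ 2 * v r / Rpower (v r) m)
    by (rewrite <- Hvv at 1; field; lra).
  field. repeat split; lra.
Qed.

Lemma is_derive_decay_gap (delta r : R) : 0 < r ->
  is_derive (decay_gap n m beta delta v) r
    (r ^ (n - 1) * v r * ((beta - delta) * (N + elasticity v r) - (N * beta - alpha))).
Proof.
  intro Hr. assert (Hv := v_pos r Hr).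
  unfold decay_gap. auto_derive.
  - split; [now apply v_derivable|]. split; [|exact I].
    eexists. now apply is_derive_radial_flux.
  - change (Derive (fun x => radial_flux n m beta v x) r) with (Derive (radial_flux n m beta v) r).
    rewrite (is_derive_unique _ _ _ (is_derive_radial_flux r Hr)).
    change (Derive (fun x => v x) r) with (Derive v r).
    unfold elasticity. rewrite <- Nat.sub_1_r, <- (pow_pred_mul r n) by lia.
    field. lra.
Qed.

Lemma radial_flux_liminf (r c : R) : 0 < r -> 0 < c ->
  exists t, 0 < t < r /\ radial_flux n m beta v t < c.
Proof.
  intros Hr Hc.
  pose proof dim_ge_3 as HN.
  destruct (v_near_eta 1 Rlt_0_1) as [tau [Htau Hnear]].
  set (B := beta * (eta + 1)).
  assert (HB : 0 < B) by (unfold B; nra).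
  set (r' := Rmin (Rmin r tau) (Rmin 1 (c / (2 * B)))).
  assert (Hr' : 0 < r') by (repeat apply Rmin_pos; try apply Rdiv_lt_0_compat; lra).
  assert (r' <= Rmin r tau) by apply Rmin_l. assert (r' <= Rmin 1 (c / (2 * B))) by apply Rmin_r.
  pose proof (Rmin_l r tau). pose proof (Rmin_r r tau).
  pose proof (Rmin_l 1 (c / (2 * B))). pose proof (Rmin_r 1 (c / (2 * B))).
  destruct (exists_small_pow_mul_derive u (Derive u) (n - 1)) with r' (c * m / (2 * (N - 1)))
    as [t [Ht Hsmall]].
  - lia.
  - intros x _. apply exp_pos.
  - intros x Hx. apply Derive_correct. eexists. now apply is_derive_vpow.
  - exact Hr'.
  - apply Rdiv_lt_0_compat; nra.
  - exists t. split; [lra|]. unfold radial_flux.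
    assert (Hflux : (N - 1) / m * (t ^ (n - 1) * Derive u t) < c / 2).
    { apply (Rmult_lt_compat_l ((N - 1) / m)) in Hsmall; [|apply Rdiv_lt_0_compat; lra].
      replace ((N - 1) / m * (c * m / (2 * (N - 1)))) with (c / 2) in Hsmall by (field; lra).
      exact Hsmall. }
    assert (Hv : 0 < v t < eta + 1).
    { split; [apply v_pos | apply Hnear]; lra. }
    assert (Htn : 0 <= t ^ n <= t) by (split; [apply pow_le | apply pow_le_self]; lra || lia).
    assert (Hbeta : beta * t ^ n * v t <= t * B).
    { replace (t * B) with (beta * (t * (eta + 1))) by (unfold B; ring).
      rewrite Rmult_assoc. apply Rmult_le_compat_l; [lra|]. apply Rmult_le_compat; lra. }
    assert (t * B < c / 2).
    { apply (Rlt_le_trans _ (c / (2 * B) * B)); [apply Rmult_lt_compat_r; lra|].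
      right. field. lra. }
    lra.
Qed.

Lemma radial_flux_le_near_zero (eps tau : R) :
  0 < tau -> (forall r, 0 < r < tau -> v r <= eta + eps) ->
  forall r, 0 < r < tau ->
  radial_flux n m beta v r <= (N * beta - alpha) * (eta + eps) / N * r ^ n.
Proof.
  intros Htau Hupper r Hr.
  pose proof dim_ge_3 as HN.
  assert (Hbound : 0 <= eta + eps)
    by (pose proof (v_pos (tau / 2)); pose proof (Hupper (tau / 2)); lra).
  set (M := (N * beta - alpha) * (eta + eps) / N).
  assert (HM : 0 <= M)
    by (unfold M, Rdiv; apply Rmult_le_pos; [nra | left; apply Rinv_0_lt_compat; lra]).
  cut (radial_flux n m beta v r - M * r ^ n <= 0); [lra|].
  apply (nonpos_of_nonincreasing_liminf (fun x => radial_flux n m beta v x - M * x ^ n)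
           (fun x => (N * beta - alpha) * x ^ (n - 1) * (v x - (eta + eps))) tau); [| | |exact Hr].
  - intros x Hx. auto_derive.
    + eexists; apply is_derive_radial_flux; lra.
    + change (Derive (fun y => radial_flux n m beta v y) x)
        with (Derive (radial_flux n m beta v) x).
      rewrite (is_derive_unique _ _ _ (is_derive_radial_flux x ltac:(lra))).
      unfold M. rewrite Nat.sub_1_r. field. lra.
  - intros x Hx. assert (0 <= x ^ (n - 1)) by (apply pow_le; lra).
    pose proof (Hupper x Hx). apply Rmult_le_0_l; [nra | lra].
  - intros r' c Hr' Hc. destruct (radial_flux_liminf r' c Hr' Hc) as [t [Ht Hflux]].
    exists t. split; [exact Ht|].
    assert (0 <= M * t ^ n) by (apply Rmult_le_pos; [lra | apply pow_le; lra]).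
    lra.
Qed.

Lemma decay_gap_pos_near_zero (delta : R) :
  0 < delta < beta -> delta * N < alpha ->
  exists tau, 0 < tau /\ forall r, 0 < r < tau -> 0 < decay_gap n m beta delta v r.
Proof.
  intros Hdelta Hdelta_alpha.
  pose proof dim_ge_3 as HN.
  (* With this [eps],
     [N (beta - delta) (eta - eps) - (N beta - alpha) (eta + eps) = eps (alpha + N delta)]. *)
  set (eps := eta * (alpha - delta * N) / (2 * N * beta)).
  assert (Heps : 0 < eps) by (unfold eps; apply Rdiv_lt_0_compat; nra).
  assert (Heps_def : eps * (2 * N * beta) = eta * (alpha - delta * N)) by (unfold eps; field; nra).
  destruct (v_near_eta eps Heps) as [tau [Htau Hnear]].
  exists tau. split; [exact Htau|]. intros r Hr.
  assert (Hv := Hnear r Hr).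
  assert (Hflux := radial_flux_le_near_zero eps tau Htau
                     ltac:(intros x Hx; apply Rlt_le, Hnear, Hx) r Hr).
  assert (Hmargin : (N * beta - alpha) * (eta + eps) / N < (beta - delta) * (eta - eps)).
  { apply (Rmult_lt_reg_r N); [lra|]. unfold Rdiv. rewrite Rmult_assoc, Rinv_l, Rmult_1_r by lra.
    assert (0 < eps * (alpha + delta * N)) by (apply Rmult_lt_0_compat; nra).
    lra. }
  assert (Hrn : 0 < r ^ n) by (apply pow_lt; lra).
  unfold decay_gap.
  assert ((beta - delta) * (eta - eps) <= (beta - delta) * v r) by (apply Rmult_le_compat_l; lra).
  nra.
Qed.

Lemma w_of_small_near_zero (W : R) : 0 < W ->
  exists tau, 0 < tau /\ forall r, 0 < r < tau -> w r < W.
Proof.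
  intro HW.
  destruct (v_near_eta eta eta_pos) as [tau0 [Htau0 Hnear]].
  set (K := Rpower (2 * eta) (1 - m)).
  assert (HK : 0 < K) by apply exp_pos.
  exists (Rmin (Rmin tau0 1) (W / K)). split.
  { apply Rmin_pos; [apply Rmin_pos | apply Rdiv_lt_0_compat]; lra. }
  intros r Hr.
  assert (Hr1 : r < Rmin tau0 1) by (pose proof (Rmin_l (Rmin tau0 1) (W / K)); lra).
  assert (Hr2 : r < W / K) by (pose proof (Rmin_r (Rmin tau0 1) (W / K)); lra).
  pose proof (Rmin_l tau0 1). pose proof (Rmin_r tau0 1).
  assert (Hv : 0 < v r < 2 * eta).
  { split; [apply v_pos | replace (2 * eta) with (eta + eta) by ring; apply Hnear]; lra. }
  assert (HvK : Rpower (v r) (1 - m) <= K) by (apply Rle_Rpower_l; lra).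
  assert (Hr_sq : r ^ 2 <= r) by (apply pow_le_self; lra || lia).
  assert (HrK : r * K < W).
  { apply (Rlt_le_trans _ (W / K * K)); [apply Rmult_lt_compat_r; lra | right; field; lra]. }
  unfold w_of. assert (0 < Rpower (v r) (1 - m)) by apply exp_pos.
  assert (0 <= r ^ 2) by apply pow2_ge_0.
  nra.
Qed.

Lemma w_of_derive_neg_at_level (delta s r : R) :
  0 < r -> 0 < delta -> 2 < (1 - m) * s ->
  w r = (N - 1) * s / delta -> 0 <= decay_gap n m beta delta v r ->
  w r / r * (2 + (1 - m) * elasticity v r) < 0.
Proof.
  intros Hr Hdelta Hs Hw Hgap.
  pose proof dim_ge_3 as HN.
  assert (Hscale : 0 < r ^ (n - 1) * Rpower (v r) m)
    by (apply Rmult_lt_0_compat; [apply pow_lt; lra | apply exp_pos]).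
  assert (Hdecay : 0 <= - (N - 1) * elasticity v r - delta * w r).
  { apply (Rmult_le_reg_l _ _ _ Hscale). rewrite Rmult_0_r, <- decay_gap_scaled by exact Hr.
    apply Rmult_le_pos; lra. }
  assert (Hdw : delta * w r = (N - 1) * s) by (rewrite Hw; field; lra).
  assert (Hq : elasticity v r <= - s) by nra.
  assert (Hspos : 0 < s) by nra.
  assert (0 < w r / r) by (rewrite Hw; apply Rdiv_lt_0_compat; [apply Rdiv_lt_0_compat|]; nra).
  assert (2 + (1 - m) * elasticity v r < 0) by nra.
  nra.
Qed.

Lemma decay_gap_derive_pos_at_zero (delta s r : R) :
  0 < r -> 0 < delta < beta -> (beta - delta) * s < alpha - delta * N ->
  decay_gap n m beta delta v r = 0 -> w r <= (N - 1) * s / delta ->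
  0 < r ^ (n - 1) * v r * ((beta - delta) * (N + elasticity v r) - (N * beta - alpha)).
Proof.
  intros Hr Hdelta Hs Hgap Hw.
  pose proof dim_ge_3 as HN.
  assert (Hscale : 0 < r ^ (n - 1) * Rpower (v r) m)
    by (apply Rmult_lt_0_compat; [apply pow_lt; lra | apply exp_pos]).
  assert (Hdecay : - (N - 1) * elasticity v r - delta * w r = 0).
  { apply (Rmult_eq_reg_l (r ^ (n - 1) * Rpower (v r) m)); [|lra].
    rewrite Rmult_0_r, <- decay_gap_scaled, Hgap by exact Hr. ring. }
  assert (Hdw : delta * w r <= (N - 1) * s).
  { apply (Rmult_le_compat_l delta) in Hw; [|lra]. rewrite Hw. right. field. lra. }
  assert (Hq : - s <= elasticity v r) by nra.
  assert (0 < r ^ (n - 1) * v r) by (apply Rmult_lt_0_compat; [apply pow_lt | apply v_pos]; lra).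
  assert (0 < (beta - delta) * (N + elasticity v r) - (N * beta - alpha)) by nra.
  now apply Rmult_lt_0_compat.
Qed.

Lemma w_of_lt_barrier_level (delta s : R) :
  0 < delta < beta -> 2 < (1 - m) * s -> (beta - delta) * s < alpha - delta * N ->
  forall r, 0 < r -> w r < (N - 1) * s / delta.
Proof.
  intros Hdelta Hs1 Hs2 r Hr.
  pose proof dim_ge_3 as HN.
  set (W := (N - 1) * s / delta).
  assert (HW : 0 < W) by (unfold W; apply Rdiv_lt_0_compat; nra).
  destruct (w_of_small_near_zero W HW) as [tau1 [Htau1 Hw_small]].
  destruct (decay_gap_pos_near_zero delta Hdelta ltac:(nra)) as [tau2 [Htau2 Hgap_pos]].
  assert (Hbarrier := pos_of_barrier (fun x => W - w x) (decay_gap n m beta delta v)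
    (fun x => - (w x / x * (2 + (1 - m) * elasticity v x)))
    (fun x => x ^ (n - 1) * v x * ((beta - delta) * (N + elasticity v x) - (N * beta - alpha)))
    (Rmin tau1 tau2)).
  destruct Hbarrier with r as [Hlevel _]; [| | | | | | exact Hr | lra].
  - now apply Rmin_pos.
  - intros x Hx. auto_derive.
    + eexists. now apply is_derive_w_of.
    + change (Derive (fun y => w y) x) with (Derive w x).
      rewrite (is_derive_unique _ _ _ (is_derive_w_of x Hx)). ring.
  - intros x Hx. now apply is_derive_decay_gap.
  - intros x Hx. pose proof (Rmin_l tau1 tau2). pose proof (Rmin_r tau1 tau2).
    split; [pose proof (Hw_small x ltac:(lra)); lra | apply Hgap_pos; lra].
  - intros x Hx Hlev Hgap.
    assert (w x / x * (2 + (1 - m) * elasticity v x) < 0); [|lra].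
    apply (w_of_derive_neg_at_level delta s); unfold W in *; (lra || assumption).
  - intros x Hx Hgap Hlev.
    apply (decay_gap_derive_pos_at_zero delta s); unfold W in *; (lra || assumption).
Qed.

End RadialSolution.

Lemma exists_scale_between (a b c : R) :
  0 < a -> 0 < b -> 2 * b < a * c -> exists s, 2 < a * s /\ b * s < c.
Proof.
  intros Ha Hb Habc.
  assert (Hlt : 2 / a < c / b).
  { apply (Rmult_lt_reg_r (a * b)); [nra|].
    replace (2 / a * (a * b)) with (2 * b) by (field; lra).
    replace (c / b * (a * b)) with (a * c) by (field; lra).
    exact Habc. }
  exists ((2 / a + c / b) / 2). split.
  - replace 2 with (a * (2 / a)) at 1 by (field; lra). apply Rmult_lt_compat_l; lra.
  - replace c with (b * (c / b)) at 2 by (field; lra). apply Rmult_lt_compat_l; lra.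
Qed.

Lemma exists_barrier_parameters (N m alpha beta rho : R) :
  0 < N -> m < 1 -> 0 < beta -> 0 < rho -> alpha * (1 - m) = 2 * beta + rho ->
  exists delta s, 0 < delta < beta /\ 2 < (1 - m) * s /\ (beta - delta) * s < alpha - delta * N.
Proof.
  intros HN Hm Hbeta Hrho Halpha.
  assert (HmN : 0 < (1 - m) * N) by nra.
  set (delta := Rmin (beta / 2) (rho / (2 * ((1 - m) * N)))).
  assert (Hdelta : 0 < delta) by (apply Rmin_pos; apply Rdiv_lt_0_compat; nra).
  assert (Hdelta_beta : delta <= beta / 2) by apply Rmin_l.
  assert (Hdelta_rho : delta * ((1 - m) * N) <= rho / 2).
  { apply (Rle_trans _ (rho / (2 * ((1 - m) * N)) * ((1 - m) * N))).
    - apply Rmult_le_compat_r; [lra | apply Rmin_r].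
    - right. field. lra. }
  destruct (exists_scale_between (1 - m) (beta - delta) (alpha - delta * N)) as [s [Hs1 Hs2]];
    [lra | lra | |].
  - replace ((1 - m) * (alpha - delta * N)) with (alpha * (1 - m) - delta * ((1 - m) * N)) by ring.
    lra.
  - exists delta, s. repeat split; lra.
Qed.

Theorem lemma2p6 (n : nat) (m eta rho alpha beta : R) (v : R -> R) :
  (3 <= n)%nat ->
  0 < m -> m < (INR n - 2) / INR n ->
  0 < eta -> 0 < rho ->
  alpha = (2 * beta + rho) / (1 - m) ->
  0 < alpha -> alpha <= INR n * beta ->
  radial_solution n m alpha beta eta v ->
  exists C1 : R, 0 < C1 /\ forall r : R, 1 <= r -> w_of m v r <= C1.
Proof.
  intros Hn Hm Hmn Heta Hrho Halpha_def Halpha Halpha_beta Hsol.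
  unfold radial_solution in Hsol. cbv zeta in Hsol.
  destruct Hsol as (Hpos & Hdv & _ & Hddu & Hode & Hv0 & Hlim).
  assert (HN : 3 <= INR n) by (apply (le_INR 3) in Hn; simpl in Hn; lra).
  assert (Hm1 : m < 1).
  { enough ((INR n - 2) / INR n < 1) by lra.
    apply (Rmult_lt_reg_r (INR n)); [lra|].
    unfold Rdiv. rewrite Rmult_assoc, Rinv_l by lra. lra. }
  assert (Hbeta : 0 < beta) by nra.
  assert (Hrel : alpha * (1 - m) = 2 * beta + rho) by (rewrite Halpha_def; field; lra).
  destruct (exists_barrier_parameters (INR n) m alpha beta rho) as (delta & s & Hdelta & Hs1 & Hs2);
    [lra | exact Hm1 | exact Hbeta | exact Hrho | exact Hrel |].
  assert (Hcont : forall eps, 0 < eps ->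
            exists tau, 0 < tau /\ forall r, 0 < r < tau -> Rabs (v r - eta) < eps).
  { intros eps Heps. rewrite <- Hv0.
    exact (right_continuous_of_right_derivative v 0 Hlim eps Heps). }
  exists ((INR n - 1) * s / delta). split; [apply Rdiv_lt_0_compat; nra|].
  intros r Hr. left.
  exact (w_of_lt_barrier_level n m alpha beta eta v Hn Hm Hm1 Heta Hbeta Halpha_beta
           Hpos Hdv Hddu Hode Hcont delta s Hdelta Hs1 Hs2 r ltac:(lra)).
Qed.
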